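(* Let $A=(a_{kl})$ be an $n\times n$ matrix with entries in $\{0,1,2,\dots\}\cup\{\infty\}$ and no zeros on the diagonal. Let $i\neq j$ be indices such that $a_{ij}\neq0$ and row $j$ of $A$ contains no $\infty$. Let $A'$ be obtained from $A$ by replacing row $i$ with $(a_{i1}+a_{j1},\dots,a_{in}+a_{jn})$ and then subtracting $1$ from the $(i,j)$ entry, so that the new $(i,j)$ entry is $a_{ij}+a_{jj}-1$. All other rows are unchanged. Then $A\sim_M A'$. Moreover: - $A'$ has no zeros on the diagonal; - if $A$ is irreducible, so is $A'$; - if the top-left $m\times m$ corner of $A$ is irreducible, so is the top-left $m\times m$ corner of $A'$.
   Context: Arithmetic conventions: $\infty+a=\infty$ and $\infty-1=\infty$. For a finite index set $X$ and an $X\times X$ matrix $A$ with entries in $\{0,1,2,\dots\}\cup\{\infty\}$, $G_A$ is the graph with vertex set $X$ and exactly $A(x,y)$ edges from $x$ to $y$. A matrix $A$ is irreducible if $G_A$ is strongly connected. For matrices, $A\sim_M B$ means $G_A\sim_M G_B$. A graph $G=(G^0,G^1,r,s)$ may have multiple edges and loops. A source receives no edges, a sink emits no edges, and an infinite emitter emits infinitely many edges. A vertex is singular if it is a sink or infinite emitter, and regular otherwise. Move-equivalence $\sim_M$ is the smallest equivalence relation on graphs with finitely many vertices such that $G\sim_M E$ whenever $E$ is isomorphic to a graph obtained from $G$ by one of the following moves. (S) Delete a regular source together with the edges it emits. (R) For a regular vertex $u$ emitting exactly one edge $f$, with $r(f)\neq u$, and all of whose incoming edges have the same source $v$: delete $u$,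 $f$ and the edges into $u$, and add for each $e\in r^{-1}(u)$ an edge $[ef]$ from $v$ to $r(f)$. (O) Out-splitting at a non-sink $v$ along a partition $\mathcal E_1,\dots,\mathcal E_n$ of $s^{-1}(v)$ with at most one infinite part. Replace $v$ by $v^1,\dots,v^n$. Each edge $e$ into $v$ becomes copies $e^1,\dots,e^n$ with $r(e^i)=v^i$ and source $s(e)$, or source $v^j$ if $s(e)=v$ and $e\in\mathcal E_j$. An edge from $v$ to $w\neq v$ lying in $\mathcal E_i$ gets source $v^i$. (I) In-splitting at a regular non-source $v$ along a partition $\mathcal E_1,\dots,\mathcal E_n$ of $r^{-1}(v)$. Replace $v$ by $v^1,\dots,v^n$. Each edge $e$ out of $v$ becomes copies $e^1,\dots,e^n$ with $s(e^i)=v^i$ and range $r(e)$, or range $v^j$ if $r(e)=v$ and $e\in\mathcal E_j$. An edge into $v$ from $w\neq v$ lying in $\mathcal E_i$ gets range $v^i$. *)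

From Stdlib Require Import Relations List.
From mathcomp Require Import all_boot matrix.

Set Implicit Arguments.
Unset Strict Implicit.
Unset Printing Implicit Defensive.

Inductive xnat : Type := xfin of nat | xinf.

Definition xadd (a b : xnat) : xnat :=
  match a, b with xfin m, xfin k => xfin (m + k) | _, _ => xinf end.

Definition xpred (a : xnat) : xnat :=
  match a with xfin m => xfin m.-1 | xinf => xinf end.

Definition xlt (k : nat) (a : xnat) : Prop :=
  match a with xfin m => k < m | xinf => True end.

Record graph : Type := Graph {
  gV : finType;
  gE : Type;
  gs : gE -> gV;
  gr : gE -> gV }.

Section GraphNotions.
Variable G : graph.

Definition fin_pred (P : gE G -> Prop) : Prop :=
  exists l : list (gE G), forall e, P e -> List.In e l.

Definition is_source (v : gV G) : Prop := forall e, gr e <> v.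
Definition is_sink (v : gV G) : Prop := forall e, gs e <> v.
Definition regular (v : gV G) : Prop :=
  (exists e, gs e = v) /\ fin_pred (fun e => gs e = v).

Definition edge_rel : relation (gV G) :=
  fun x y => exists e, gs e = x /\ gr e = y.
Definition strongly_connected : Prop :=
  forall x y : gV G, clos_refl_trans _ edge_rel x y.
End GraphNotions.

(* H is isomorphic to the graph with vertex set {x : VT | inV x},
   edge set {t : ET | inE t}, source src and range rng. *)
Definition iso_desc (H : graph) (VT ET : Type) (inV : VT -> Prop)
    (inE : ET -> Prop) (src rng : ET -> VT) : Prop :=
  exists (bv : gV H -> VT) (be : gE H -> ET),
    [/\ injective bv, (forall x, inV (bv x)) & (forall y, inV y -> exists x, bv x = y)] /\
    [/\ injective be, (forall e, inE (be e)) & (forall t, inE t -> exists e, be e = t)] /\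
    (forall e, bv (gs e) = src (be e)) /\
    (forall e, bv (gr e) = rng (be e)).

Definition moveS (G H : graph) : Prop :=
  exists v : gV G, regular v /\ is_source v /\
    iso_desc H (fun x : gV G => x <> v) (fun e : gE G => gs e <> v)
      (@gs G) (@gr G).

Definition moveR (G H : graph) : Prop :=
  exists (u v : gV G) (f : gE G),
    [/\ regular u, gs f = u, (forall e, gs e = u -> e = f), gr f <> u &
        (forall e, gr e = u -> gs e = v)] /\
    iso_desc H (fun x : gV G => x <> u) (fun e : gE G => gs e <> u)
      (fun e => if gr e == u then v else gs e)
      (fun e => if gr e == u then gr f else gr e).

(* partition of {e | P e} into k nonempty blocks, block of e is p e *)
Definition partition_of (G : graph) (P : gE G -> Prop) (k : nat)
    (p : gE G -> 'I_k) : Prop :=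
  forall i : 'I_k, exists e, P e /\ p e = i.

Definition moveO (G H : graph) : Prop :=
  exists (v : gV G) (k : nat) (p : gE G -> 'I_k),
    [/\ ~ is_sink v, partition_of (fun e => gs e = v) p,
        (forall i j : 'I_k,
            ~ fin_pred (fun e => gs e = v /\ p e = i) ->
            ~ fin_pred (fun e => gs e = v /\ p e = j) -> i = j) &
    iso_desc H
      (fun z : (gV G + 'I_k)%type =>
         match z with inl x => x <> v | inr _ => True end)
      (fun t : (gE G * option 'I_k)%type =>
         match t with (e, None) => gr e <> v | (e, Some _) => gr e = v end)
      (fun t => if gs t.1 == v then inr (p t.1) else inl (gs t.1))
      (fun t => match t.2 with None => inl (gr t.1) | Some i => inr i end)].

Definition moveI (G H : graph) : Prop :=
  exists (v : gV G) (k : nat) (p : gE G -> 'I_k),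
    [/\ regular v, ~ is_source v, partition_of (fun e => gr e = v) p &
    iso_desc H
      (fun z : (gV G + 'I_k)%type =>
         match z with inl x => x <> v | inr _ => True end)
      (fun t : (gE G * option 'I_k)%type =>
         match t with (e, None) => gs e <> v | (e, Some _) => gs e = v end)
      (fun t => match t.2 with None => inl (gs t.1) | Some i => inr i end)
      (fun t => if gr t.1 == v then inr (p t.1) else inl (gr t.1))].

Definition move (G H : graph) : Prop :=
  moveS G H \/ moveR G H \/ moveO G H \/ moveI G H.

Definition move_eq : relation graph := clos_refl_sym_trans graph move.

(* G_A: exactly A(x,y) edges from x to y; edge (x,y,k) with k < A(x,y) *)
Definition GA (n : nat) (A : 'M[xnat]_n) : graph :=
  @Graph 'I_n {t : 'I_n * 'I_n * nat | xlt t.2 (A t.1.1 t.1.2)}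
    (fun t => (sval t).1.1) (fun t => (sval t).1.2).

Definition irreducible (n : nat) (A : 'M[xnat]_n) : Prop :=
  strongly_connected (GA A).

Definition mx_move_eq (n m : nat) (A : 'M[xnat]_n) (B : 'M[xnat]_m) : Prop :=
  move_eq (GA A) (GA B).

Definition corner (n m : nat) (h : m <= n) (A : 'M[xnat]_n) : 'M[xnat]_m :=
  \matrix_(k < m, l < m) A (widen_ord h k) (widen_ord h l).

Definition row_add_move (n : nat) (A : 'M[xnat]_n) (i j : 'I_n) : 'M[xnat]_n :=
  \matrix_(k, l)
    if k == i then
      (if l == j then xpred (xadd (A i l) (A j l)) else xadd (A i l) (A j l))
    else A k l.

(* In-split G_A at j, separating the edge (i, j, 0) from the other edges into j.  The
   new copy j0 of j is entered only by that edge, from i, and emits a copy of every edge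
   leaving j; there are finitely many because row j has no infinite entry.  These edges
   are moved one at a time to start at i: an out-splitting at j0 puts one of them on a
   vertex of its own, which an (R)-move then removes.  When only the copy of the loop
   (j, j, 0) is left, a last (R)-move deletes j0 and fuses (i, j, 0) with that loop into
   one edge from i to j.  What remains is G_{A'}: row i has gained row j minus one edge
   to j.  As A' is positive wherever A is, strong connectivity of G_A and of its corners
   passes to G_{A'}. *)

From Stdlib Require Import Relations List.
From mathcomp Require Import all_boot matrix.
From mathcomp Require Import zify.
From Stdlib Require Import Classical ClassicalEpsilon ProofIrrelevance.

Set Implicit Arguments.
Unset Strict Implicit.
Unset Printing Implicit Defensive.

Local Notation classic_dec := excluded_middle_informative.

Lemma classic_decT (P : Prop) (T : Type) (a b : T) : P -> (if classic_dec P then a else b) = a.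
Proof. by case: classic_dec. Qed.

Lemma classic_decF (P : Prop) (T : Type) (a b : T) : ~ P -> (if classic_dec P then a else b) = b.
Proof. by case: classic_dec. Qed.

Lemma sig_eq (T : Type) (P : T -> Prop) (a b : {t | P t}) : sval a = sval b -> a = b.
Proof.
by case: a b => [x hx] [y hy] /= exy; subst y; f_equal; apply: proof_irrelevance.
Qed.

Lemma In_mem (T : eqType) (x : T) (s : seq T) : x \in s -> In x s.
Proof. by elim: s => //= y s IH; rewrite inE => /orP [/eqP ->|/IH]; [left|right]. Qed.

Lemma iso_desc_equiv H VT ET (inV inV' : VT -> Prop) (inE inE' : ET -> Prop)
    (src rng src' rng' : ET -> VT) :
  iso_desc H inV inE src rng ->
  (forall x, inV x <-> inV' x) -> (forall t, inE t <-> inE' t) ->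
  (forall t, inE t -> src t = src' t) -> (forall t, inE t -> rng t = rng' t) ->
  iso_desc H inV' inE' src' rng'.
Proof.
move=> [bv [be [[bv_inj bv_in bv_onto] [[be_inj be_in be_onto] [bv_gs bv_gr]]]]] hV hE hs hr.
exists bv, be; split; [split|split; [split|split]] => //.
- by move=> x; apply/hV.
- by move=> y /hV; apply: bv_onto.
- by move=> t; apply/hE.
- by move=> t /hE; apply: be_onto.
- by move=> t; rewrite bv_gs hs.
- by move=> t; rewrite bv_gr hr.
Qed.

Section FinitePred.
Variable G : graph.

Lemma fin_pred_sub (P Q : gE G -> Prop) : (forall g, Q g -> P g) -> fin_pred P -> fin_pred Q.
Proof. by move=> QP [l hl]; exists l => g /QP /hl. Qed.

Lemma fin_pred_inj (T : Type) (phi : gE G -> T) (l : list T) (P : gE G -> Prop) :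
  (forall g g', P g -> P g' -> phi g = phi g' -> g = g') ->
  (forall g, P g -> In (phi g) l) -> fin_pred P.
Proof.
elim: l P => [|a l IH] P phi_inj cover; first by exists nil => g /cover.
case: (classic (exists g0, P g0 /\ phi g0 = a)) => [[g0 [Pg0 phi_g0]]|no_a].
- have [l' hl'] : fin_pred (fun g => P g /\ g <> g0).
    apply: IH => [g g' [Pg _] [Pg' _]|g [Pg g_g0]]; first exact: phi_inj.
    case: (cover g Pg) => // phi_g; case: g_g0; apply: phi_inj; congruence.
  exists (g0 :: l') => g Pg; case: (classic (g = g0)) => [->|g_g0]; first by left.
  by right; apply: hl'.
- apply: IH => // g Pg; case: (cover g Pg) => // phi_g; case: no_a; by exists g.
Qed.
End FinitePred.

Section DescGraph.
Variables (VT : finType) (inV : pred VT) (ET : Type) (inE : ET -> Prop)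
  (src rng : ET -> VT) (v0 : {x : VT | inV x}).

Definition desc_graph : graph :=
  @Graph {x : VT | inV x} {t : ET | inE t}
    (fun t => insubd v0 (src (sval t))) (fun t => insubd v0 (rng (sval t))).

Hypotheses (src_in : forall t, inE t -> inV (src t)) (rng_in : forall t, inE t -> inV (rng t)).

Lemma desc_graph_gs (t : gE desc_graph) : val (gs t) = src (sval t).
Proof. by rewrite /= insubdK //; apply/src_in/svalP. Qed.

Lemma desc_graph_gr (t : gE desc_graph) : val (gr t) = rng (sval t).
Proof. by rewrite /= insubdK //; apply/rng_in/svalP. Qed.

Lemma desc_graph_iso : iso_desc desc_graph inV inE src rng.
Proof.
exists val, sval; split; [split|split; [split|split]].
- exact: val_inj.
- by move=> x; apply: valP.
- by move=> y hy; exists (exist _ y hy).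
- by move=> a b; apply: sig_eq.
- by move=> t; apply: svalP.
- by move=> t ht; exists (exist _ t ht).
- by move=> t; rewrite desc_graph_gs.
- by move=> t; rewrite desc_graph_gr.
Qed.
End DescGraph.

Section SplitVertex.
Variables (V : finType) (u : V).

Definition split_vertex (z : V + 'I_2) : bool := if z is inl x then x != u else true.

Definition split_vert (z : V + 'I_2) : {z | split_vertex z} := insubd (exist _ (inr ord0) isT) z.

Lemma split_vertK z : split_vertex z -> val (split_vert z) = z.
Proof. exact: insubdK. Qed.

Definition merge_vertex (x : V) : {z | split_vertex z} :=
  split_vert (if x == u then inr ord_max else inl x).

Lemma merge_vertexE x : val (merge_vertex x) = if x == u then inr ord_max else inl x.
Proof. by rewrite split_vertK //; case: eqP => //= /eqP. Qed.

Lemma merge_vertex_bij :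
  [/\ injective merge_vertex, forall x, merge_vertex x <> split_vert (inr ord0)
    & forall y, y <> split_vert (inr ord0) -> exists x, merge_vertex x = y].
Proof.
have w0E : val (split_vert (inr ord0)) = inr ord0 by rewrite split_vertK.
split.
- move=> x y /(f_equal val); rewrite !merge_vertexE.
  by case: eqP => [->|_]; case: eqP => [->|_] // [].
- by move=> x /(f_equal val); rewrite merge_vertexE w0E; case: eqP.
- move=> y y_w0; case yE: (val y) (valP y) => [x|b] /= y_in.
  + by exists x; apply: val_inj; rewrite merge_vertexE yE (negPf y_in).
  + exists u; apply: val_inj; rewrite merge_vertexE yE eqxx; congr inr.
    case: b yE y_in => [[|[|m]] hb] // yE _; last exact: val_inj.
    by case: y_w0; apply: val_inj; rewrite yE w0E; congr inr; apply: val_inj.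
Qed.
End SplitVertex.

Definition sep_edge (E : Type) (e g : E) : 'I_2 :=
  if classic_dec (g = e) then ord0 else ord_max.

Lemma sep_edge_eq0 (E : Type) (e g : E) : sep_edge e g = ord0 <-> g = e.
Proof. by rewrite /sep_edge; case: classic_dec. Qed.

Lemma sep_edge_self (E : Type) (e : E) : sep_edge e e = ord0.
Proof. exact/sep_edge_eq0. Qed.

Lemma sep_edge_neq (E : Type) (e g : E) : g <> e -> sep_edge e g = ord_max.
Proof. by rewrite /sep_edge; case: classic_dec. Qed.

Lemma sep_edge_partition (G : graph) (P : gE G -> Prop) (e g : gE G) :
  P e -> P g -> g <> e -> partition_of P (sep_edge e).
Proof.
move=> Pe Pg g_e [[|[|m]] hb] //.
- by exists e; split => //; apply: val_inj; rewrite sep_edge_self.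
- by exists g; split => //; apply: val_inj; rewrite sep_edge_neq.
Qed.

Section SplitInTwo.
Variables (K : graph) (u : gV K) (p : gE K -> 'I_2).

Local Notation split_edge := (gE K * option 'I_2)%type.

Definition outsplit_edge (t : split_edge) : Prop :=
  match t with (g, None) => gr g <> u | (g, Some _) => gr g = u end.
Definition outsplit_src (t : split_edge) : gV K + 'I_2 :=
  if gs t.1 == u then inr (p t.1) else inl (gs t.1).
Definition outsplit_rng (t : split_edge) : gV K + 'I_2 :=
  if t.2 is Some b then inr b else inl (gr t.1).

Definition insplit_edge (t : split_edge) : Prop :=
  match t with (g, None) => gs g <> u | (g, Some _) => gs g = u end.
Definition insplit_src (t : split_edge) : gV K + 'I_2 :=
  if t.2 is Some b then inr b else inl (gs t.1).
Definition insplit_rng (t : split_edge) : gV K + 'I_2 :=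
  if gr t.1 == u then inr (p t.1) else inl (gr t.1).

Lemma split_vertex_if (x : gV K) b : split_vertex u (if x == u then inr b else inl x).
Proof. by case: eqP => //= /eqP. Qed.

Definition outsplit2 : graph :=
  desc_graph outsplit_edge outsplit_src outsplit_rng (split_vert u (inr ord0)).
Definition insplit2 : graph :=
  desc_graph insplit_edge insplit_src insplit_rng (split_vert u (inr ord0)).

Lemma outsplit_src_in t : outsplit_edge t -> split_vertex u (outsplit_src t).
Proof. by move=> _; apply: split_vertex_if. Qed.
Lemma outsplit_rng_in t : outsplit_edge t -> split_vertex u (outsplit_rng t).
Proof. by case: t => g [b|] //= h; apply/eqP. Qed.
Lemma insplit_src_in t : insplit_edge t -> split_vertex u (insplit_src t).
Proof. by case: t => g [b|] //= h; apply/eqP. Qed.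
Lemma insplit_rng_in t : insplit_edge t -> split_vertex u (insplit_rng t).
Proof. by move=> _; apply: split_vertex_if. Qed.

Lemma outsplit2_gs (t : gE outsplit2) : val (gs t) = outsplit_src (sval t).
Proof. exact: desc_graph_gs outsplit_src_in t. Qed.
Lemma outsplit2_gr (t : gE outsplit2) : val (gr t) = outsplit_rng (sval t).
Proof. exact: desc_graph_gr outsplit_rng_in t. Qed.
Lemma insplit2_gs (t : gE insplit2) : val (gs t) = insplit_src (sval t).
Proof. exact: desc_graph_gs insplit_src_in t. Qed.
Lemma insplit2_gr (t : gE insplit2) : val (gr t) = insplit_rng (sval t).
Proof. exact: desc_graph_gr insplit_rng_in t. Qed.

Lemma split_vertex_sum (z : gV K + 'I_2) :
  split_vertex u z <-> match z with inl x => x <> u | inr _ => True end.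
Proof. by case: z => [x|b] //=; split => /eqP. Qed.

Lemma moveO_outsplit2 :
  regular u -> partition_of (fun e => gs e = u) p -> moveO K outsplit2.
Proof.
move=> [[e eu] u_fin] p_part; exists u, 2, p; split => //.
- by move=> u_sink; apply: (u_sink e).
- move=> b b' b_inf; case: b_inf; apply: fin_pred_sub u_fin; by move=> g [].
- apply: (iso_desc_equiv (desc_graph_iso _ outsplit_src_in outsplit_rng_in)) => //.
  exact: split_vertex_sum.
Qed.

Lemma moveI_insplit2 :
  regular u -> ~ is_source u -> partition_of (fun e => gr e = u) p -> moveI K insplit2.
Proof.
move=> u_reg u_nsrc p_part; exists u, 2, p; split => //.
apply: (iso_desc_equiv (desc_graph_iso _ insplit_src_in insplit_rng_in)) => //.
exact: split_vertex_sum.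
Qed.
End SplitInTwo.

Definition redirect (K : graph) (e : gE K) (v : gV K) : graph :=
  @Graph (gV K) (gE K) (fun g => if classic_dec (g = e) then v else gs g) (@gr K).

Section Redirect.
Variables (K : graph) (u v : gV K) (f e e' : gE K).
Hypotheses (v_u : v <> u) (fs : gs f = v) (fr : gr f = u)
  (into_u : forall g, gr g = u -> g = f) (es : gs e = u) (e's : gs e' = u)
  (e_e' : e <> e') (u_fin : fin_pred (fun g => gs g = u)).

Local Notation X := (outsplit2 u (sep_edge e)).
Local Notation ue := (split_vert u (inr ord0)).

Lemma e_not_into_u : gr e <> u.
Proof. by move=> /into_u e_f; apply: v_u; rewrite -fs -e_f. Qed.

Lemma e_neq_f : e <> f.
Proof. by move=> e_f; apply: v_u; rewrite -fs -e_f. Qed.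

Definition eX : gE X := exist (outsplit_edge u) (e, None) e_not_into_u.
Definition fX (b : 'I_2) : gE X := exist (outsplit_edge u) (f, Some b) fr.

Lemma ueE : val ue = inr ord0.
Proof. by rewrite split_vertK. Qed.

Lemma split_vert_vE : val (split_vert u (inl v)) = inl v.
Proof. by rewrite split_vertK //=; apply/eqP. Qed.

Lemma fX_src b : val (gs (fX b)) = inl v.
Proof. by rewrite outsplit2_gs /= /outsplit_src /= fs; case: eqP. Qed.

Lemma eX_src : gs eX = ue.
Proof.
by apply: val_inj; rewrite outsplit2_gs ueE /outsplit_src /= es eqxx sep_edge_self.
Qed.

Lemma out_ue (t : gE X) : gs t = ue -> t = eX.
Proof.
case: t => [[g o] t_in] /(f_equal val); rewrite outsplit2_gs ueE /outsplit_src /=.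
case: eqP => // gu [] /sep_edge_eq0 g_e; subst g; apply: sig_eq => /=.
by case: o t_in => // b /e_not_into_u.
Qed.

Lemma into_ue (t : gE X) : gr t = ue -> gs t = split_vert u (inl v).
Proof.
move=> /(f_equal val); rewrite outsplit2_gr ueE => t_ue; apply: val_inj.
rewrite split_vert_vE outsplit2_gs; case: t t_ue => [[g [b|]] t_in] //= _.
by rewrite /outsplit_src /= (into_u t_in) fs; case: eqP.
Qed.

(* The copy (f, Some ord0) of f plays the edge [f e] created by the (R)-move. *)
Definition edge_to_X (g : gE K) : gE X :=
  match classic_dec (g = e), classic_dec (g = f) with
  | left _, _ => fX ord0
  | right _, left _ => fX ord_max
  | right _, right g_f => exist (outsplit_edge u) (g, None) (fun gu => g_f (into_u gu))
  end.

Lemma edge_to_X_cases g :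
  [\/ g = e /\ edge_to_X g = fX ord0, g = f /\ edge_to_X g = fX ord_max
    | [/\ g <> e, g <> f & sval (edge_to_X g) = (g, None)]].
Proof.
rewrite /edge_to_X; case: classic_dec => [|g_e]; first by constructor 1.
by case: classic_dec => [|g_f]; [constructor 2 | constructor 3].
Qed.

Lemma edge_to_X_inj : injective edge_to_X.
Proof.
move=> g g' /(f_equal sval).
case: (edge_to_X_cases g) => [[-> ->]|[-> ->]|[g_e g_f ->]];
  case: (edge_to_X_cases g') => [[-> ->]|[-> ->]|[g'_e g'_f ->]] //= []; congruence.
Qed.

Lemma edge_to_X_out g : gs (edge_to_X g) <> ue.
Proof.
move=> /(f_equal val); rewrite ueE.
case: (edge_to_X_cases g) => [[_ ->]|[_ ->]|[g_e _ E]]; rewrite ?fX_src //.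
by rewrite outsplit2_gs E /outsplit_src /= sep_edge_neq //; case: eqP.
Qed.

Lemma edge_to_X_e : edge_to_X e = fX ord0.
Proof. by rewrite /edge_to_X; case: classic_dec. Qed.

Lemma edge_to_X_f : edge_to_X f = fX ord_max.
Proof.
by rewrite /edge_to_X; case: classic_dec => [/esym/e_neq_f|_] //; case: classic_dec.
Qed.

Lemma edge_to_X_onto (t : gE X) : gs t <> ue -> exists g, edge_to_X g = t.
Proof.
case: t => [[g [b|]] t_in] t_out.
- have g_f : g = f by apply: into_u.
  subst g; case: b t_in t_out => [[|[|m]] hb] // t_in t_out.
  + by exists e; rewrite edge_to_X_e; apply: sig_eq => /=; congr (_, Some _); apply: val_inj.
  + by exists f; rewrite edge_to_X_f; apply: sig_eq => /=; congr (_, Some _); apply: val_inj.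
- exists g; case: (edge_to_X_cases g) => [[g_e _]|[g_f _]|[_ _ E]].
  + by case: t_out; rewrite -eX_src; congr gs; apply: sig_eq; rewrite /= g_e.
  + by exfalso; apply: (t_in); rewrite g_f.
  + exact: sig_eq.
Qed.

Lemma edge_to_X_src g :
  merge_vertex u (@gs (redirect e v) g) =
  if gr (edge_to_X g) == ue then split_vert u (inl v) else gs (edge_to_X g).
Proof.
apply: val_inj; rewrite merge_vertexE (fun_if val) -val_eqE ueE split_vert_vE !outsplit2_gr.
rewrite [gs g]/=; case: (edge_to_X_cases g) => [[g_e ->]|[g_f ->]|[g_e g_f E]].
- by rewrite classic_decT //=; case: eqP.
- rewrite classic_decF; last by rewrite g_f; exact/nesym/e_neq_f.
  by rewrite g_f fs fX_src /=; case: eqP.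
- rewrite classic_decF // outsplit2_gs E /outsplit_src /outsplit_rng /=.
  by rewrite sep_edge_neq.
Qed.

Lemma edge_to_X_rng g :
  merge_vertex u (gr g) =
  if gr (edge_to_X g) == ue then gr eX else gr (edge_to_X g).
Proof.
apply: val_inj; rewrite merge_vertexE (fun_if val) -val_eqE ueE !outsplit2_gr.
case: (edge_to_X_cases g) => [[-> ->]|[-> ->]|[_ g_f E]] /=.
- by case: eqP => // /e_not_into_u.
- by rewrite fr eqxx.
- by rewrite E /=; case: eqP => // /into_u.
Qed.

Lemma moveR_outsplit_redirect : moveR X (redirect e v).
Proof.
exists ue, (split_vert u (inl v)), eX; split; [split|].
- by split; [exists eX; exact: eX_src | exists (eX :: nil) => t /out_ue ->; left].
- exact: eX_src.
- exact: out_ue.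
- by move=> /(f_equal val); rewrite outsplit2_gr ueE /=.
- exact: into_ue.
- have [bv_inj bv_out bv_onto] := merge_vertex_bij u.
  exists (merge_vertex u), edge_to_X; split; [by []|split; [split|split]].
  + exact: edge_to_X_inj.
  + exact: edge_to_X_out.
  + exact: edge_to_X_onto.
  + exact: edge_to_X_src.
  + exact: edge_to_X_rng.
Qed.

Lemma redirect_move_eq : move_eq K (redirect e v).
Proof.
apply: (rst_trans _ _ _ X); apply: rst_step.
- right; right; left; apply: moveO_outsplit2.
  + by split; [exists e|].
  + exact: sep_edge_partition es e's (nesym e_e').
- by right; left; apply: moveR_outsplit_redirect.
Qed.
End Redirect.

Section Bypass.
Variables (V : finType) (E : Type) (r : E -> V) (u v : V) (f d : E).
Hypotheses (v_u : v <> u) (fr : r f = u) (into_u : forall g, r g = u -> g = f).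

(* H is the graph without u in which the edges leaving u other than d leave from v, and f
   and d are fused into one edge from v to r d. *)
Definition bypass_desc (H : graph) (s : E -> V) : Prop :=
  iso_desc H (fun x => x <> u) (fun g => g <> d)
    (fun g => if s g == u then v else s g) (fun g => if r g == u then r d else r g).

Lemma moveR_bypass (s : E -> V) (H : graph) :
  s f = v -> s d = u -> (forall g, s g = u -> g = d) ->
  bypass_desc H s -> moveR (@Graph V E s r) H.
Proof.
move=> fs ds out_u H_desc.
have d_out : r d <> u by move=> /into_u d_f; apply: v_u; rewrite -fs -d_f.
exists u, v, d; split; [split|] => //.
- by split; [exists d | exists (d :: nil) => g /out_u ->; left].
- by move=> g /into_u ->.
- apply: (iso_desc_equiv H_desc) => //.
  + by move=> g; split=> [g_d /out_u|g_u g_d]; [|apply: g_u; rewrite g_d].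
  + move=> g g_d /=; have g_u : s g <> u by move=> /out_u.
    have /negPf -> : s g != u by apply/eqP.
    by case: eqP => // /into_u ->; rewrite fs.
Qed.

Lemma move_eq_bypass (L : list E) (s : E -> V) (H : graph) :
  s f = v -> s d = u -> (forall g, s g = u -> g = d \/ In g L) ->
  bypass_desc H s -> move_eq (@Graph V E s r) H.
Proof.
elim: L s => [|e L IH] s fs ds out_u H_desc.
  apply: rst_step; right; left; apply: moveR_bypass => // g /out_u [] //.
have [[es e_d]|] := classic (s e = u /\ e <> d); last first.
  move=> e_keep; apply: IH => // g /[dup] gu /out_u [->|[g_e|]]; [by left | | by right].
  by left; subst g; apply: NNPP => e_d; apply: e_keep.
have u_fin : fin_pred (G := @Graph V E s r) (fun g => gs g = u).
  by exists (d :: e :: L) => g /out_u [->|]; [left | right].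
have redirect_e := @redirect_move_eq (@Graph V E s r) u v f e d v_u fs fr into_u es ds e_d u_fin.
apply: (rst_trans _ _ _ _ _ redirect_e).
apply: IH => /=.
- by rewrite classic_decF // => f_e; apply: v_u; rewrite -fs f_e.
- by rewrite classic_decF // => d_e; apply: e_d.
- move=> g; case: (classic (g = e)) => [->|g_e]; first by rewrite classic_decT.
  by rewrite classic_decF // => /out_u [->|[/esym|]]; [left | | right].
- apply: (iso_desc_equiv H_desc) => // g _ /=.
  case: (classic (g = e)) => [->|g_e]; last by rewrite classic_decF.
  by rewrite classic_decT // es eqxx; case: eqP.
Qed.
End Bypass.

Lemma xlt0_neq0 (a : xnat) : a <> xfin 0 -> xlt 0 a.
Proof. by case: a => //= [[|m]]. Qed.

Lemma xlt0_xlt (k : nat) (a : xnat) : xlt k a -> xlt 0 a.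
Proof. by case: a => //= m; lia. Qed.

Lemma strongly_connected_GA_mono (n : nat) (B C : 'M[xnat]_n) :
  (forall x y, xlt 0 (B x y) -> xlt 0 (C x y)) ->
  strongly_connected (GA B) -> strongly_connected (GA C).
Proof.
move=> BC B_sc x y; elim: (B_sc x y) => {x y} [x y [[[[a b] k] hk] [/= <- <-]]|x|x y z _ xy _ yz].
- apply: rt_step.
  by exists (exist (fun t : 'I_n * 'I_n * nat => xlt t.2 (C t.1.1 t.1.2)) (a, b, 0)
    (BC _ _ (xlt0_xlt hk))).
- exact: rt_refl.
- exact: rt_trans xy yz.
Qed.

Section RowAddMove.
Variables (n : nat) (A : 'M[xnat]_n) (i j : 'I_n).
Hypotheses (A_diag : forall k, A k k <> xfin 0) (i_j : i != j) (Aij : A i j <> xfin 0)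
  (rowj_fin : forall l, A j l <> xinf).

Local Notation A' := (row_add_move A i j).
Local Notation triple := ('I_n * 'I_n * nat)%type.
Local Notation edgeA := (fun t : triple => xlt t.2 (A t.1.1 t.1.2)).
Local Notation edgeA' := (fun t : triple => xlt t.2 (A' t.1.1 t.1.2)).

Definition rowj (y : 'I_n) : nat := if A j y is xfin m then m else 0.

Lemma rowjE y : A j y = xfin (rowj y).
Proof. by rewrite /rowj; move: (@rowj_fin y); case: (A j y). Qed.

Lemma rowj_diag : 0 < rowj j.
Proof. by move: (@A_diag j); rewrite rowjE; case: (rowj j). Qed.

(* The number of edges to y that row i gains; the loop (j, j, 0) is fused with (i, j, 0). *)
Definition extra (y : 'I_n) : nat := rowj y - (y == j).

Lemma row_add_move_other x y : x != i -> A' x y = A x y.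
Proof. by move=> x_i; rewrite mxE (negPf x_i). Qed.

Lemma row_add_move_i y k :
  xlt k (A' i y) <-> k < extra y \/ extra y <= k /\ xlt (k - extra y) (A i y).
Proof.
rewrite mxE eqxx rowjE /extra; have := rowj_diag.
case: eqP => [->|_] /=; case: (A i _) => [a|] /=; rewrite -?subn1; split; try lia;
  by move=> _; case: (ltnP k (rowj _ - _)) => h; [left|right].
Qed.

Lemma row_add_move_diag k : A' k k <> xfin 0.
Proof.
have [->|k_i] := eqVneq k i; last by rewrite row_add_move_other //; exact: A_diag.
rewrite mxE eqxx (negPf i_j) rowjE; move: (@A_diag i); case: (A i i) => //= a a0.
by case=> sum0; apply: a0; congr xfin; lia.
Qed.

Lemma row_add_move_pos x y : xlt 0 (A x y) -> xlt 0 (A' x y).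
Proof.
have [->|x_i] := eqVneq x i; last by rewrite row_add_move_other.
by move=> Aiy; apply/row_add_move_i; case: (ltnP 0 (extra y)) => h; [left|right; rewrite sub0n].
Qed.

(* Edge (x, y, k) of G_{A'} as an edge of the in-split graph, where Some ord0 / Some ord_max
   mark the copies of edges leaving j from j0 / from the other copy of j.  The first
   [extra y] edges from i to y are the copies of the edges (j, y, _) other than the loop;
   the remaining ones are the old edges from i, with (i, j, 0) standing for the fused edge. *)
Definition raw_image (t : triple) : triple * option 'I_2 :=
  let: (x, y, k) := t in
  if x == i then
    if k < extra y then ((j, y, k + (y == j)), Some ord0) else ((i, y, k - extra y), None)
  else ((x, y, k), if x == j then Some ord_max else None).

Definition raw_preimage (t : triple * option 'I_2) : triple :=
  let: ((x, y, k), o) := t in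
  match o with
  | Some b => if b == ord0 then (i, y, k - (y == j)) else (j, y, k)
  | None => if x == i then (i, y, k + extra y) else (x, y, k)
  end.

Definition insplit_raw (t : triple * option 'I_2) : Prop :=
  edgeA t.1 /\ (if t.2 is Some _ then t.1.1.1 = j else t.1.1.1 <> j).

Definition last_raw : triple * option 'I_2 := ((j, j, 0), Some ord0).

Lemma raw_image_insplit t : edgeA' t -> insplit_raw (raw_image t).
Proof.
case: t => [[x y] k] /=; have [->|x_i] := eqVneq x i.
- move=> /row_add_move_i Ak.
  case: ltnP => k_extra; split => //=; last exact/eqP.
    by rewrite rowjE /=; move: k_extra; rewrite /extra; case: (y == j) => /=; lia.
  by case: Ak => [|[]] //; rewrite ltnNge k_extra.
- rewrite row_add_move_other //; split => //=.
  by case: eqP => [|/eqP x_j x_jE] //; move: x_j; rewrite x_jE eqxx.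
Qed.

Lemma raw_image_inj : injective raw_image.
Proof.
move=> [[x1 y1] k1] [[x2 y2] k2] /=.
case: (x1 =P i) => [->|x1_i]; case: (x2 =P i) => [->|x2_i];
  do ?[case: ifP => ?]; move=> //= E; try case: E => *; subst; try congruence.
all: suff -> : k1 = k2 by []; lia.
Qed.

Lemma raw_image_neq_last t : raw_image t <> last_raw.
Proof.
case: t => [[x y] k]; rewrite /raw_image /last_raw; case: ifP => _; first case: ifP => _.
- by case=> y_j; rewrite y_j eqxx addn1.
- by case.
- by case: ifP => // _ [] _ _ _ /(f_equal val).
Qed.

Lemma raw_preimageK t :
  insplit_raw t -> t <> last_raw -> edgeA' (raw_preimage t) /\ raw_image (raw_preimage t) = t.
Proof.
case: t => [[[x y] k] [b|]] [/= Ak x_src] t_last.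
- subst x; case: eqP => [b0|/eqP b1].
  + have yj_k : (y == j) <= k.
      by case: eqP => // y_j; subst y b; case: k Ak t_last => // _ /(_ erefl).
    have k_extra : k - (y == j) < extra y by move: Ak; rewrite rowjE /extra /=; lia.
    split; first by apply/row_add_move_i; left.
    by rewrite /= eqxx k_extra b0 subnK.
  + split; first by rewrite /= row_add_move_other // eq_sym.
    rewrite /= eq_sym (negPf i_j) eqxx; congr (_, Some _); apply: val_inj.
    by case: b b1 t_last => [[|[|m]] hb].
- have [x_i|x_i] := eqVneq x i.
  + subst x; split; first by apply/row_add_move_i; right; rewrite addnK leq_addl.
    by rewrite /= eqxx ltnNge leq_addl /= addnK.
  + split; first by rewrite /= row_add_move_other.
    by rewrite /= (negPf x_i); case: eqP.
Qed.

Lemma i_neq_j : i <> j.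
Proof. exact/eqP. Qed.

Definition eij : gE (GA A) := exist edgeA (i, j, 0) (xlt0_neq0 Aij).
Definition ejj : gE (GA A) := exist edgeA (j, j, 0) (xlt0_neq0 (@A_diag j)).

Lemma ejj_neq_eij : ejj <> eij.
Proof. by move=> /(f_equal sval) [] /esym/i_neq_j. Qed.

Definition edge_of (t : triple) : gE (GA A) :=
  if classic_dec (edgeA t) is left h then exist edgeA t h else eij.

Lemma edge_ofK t : edgeA t -> sval (edge_of t) = t.
Proof. by rewrite /edge_of; case: classic_dec. Qed.

Lemma fin_out_j : fin_pred (fun g : gE (GA A) => gs g = j).
Proof.
pose M := \max_(y < n) rowj y.
apply: (@fin_pred_inj (GA A) _ sval [seq (j, y, k) | y <- enum 'I_n, k <- iota 0 M]).
  by move=> g g' _ _; apply: sig_eq.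
move=> [[[x y] k] Ak] /= x_j; subst x; apply: In_mem; apply/allpairsP; exists (y, k) => //=.
rewrite mem_enum mem_iota add0n; split=> //; move: Ak; rewrite rowjE /= => Ak.
exact: leq_trans Ak (leq_bigmax_cond (F := rowj) y isT).
Qed.

Local Notation Gj := (@insplit2 (GA A) j (sep_edge eij)).
Local Notation j0 := (split_vert j (inr ord0)).
Local Notation vi := (split_vert j (inl i)).

Definition eij0 : gE Gj := exist _ (eij, None) i_neq_j.
Definition ejj0 : gE Gj := exist _ (ejj, Some ord0) (erefl j).

Lemma moveI_insplit : moveI (GA A) Gj.
Proof.
apply: moveI_insplit2; first by split; [exists ejj | exact: fin_out_j].
- by move=> j_src; apply: (j_src eij).
- exact: sep_edge_partition ejj_neq_eij.
Qed.

Definition raw_of (g : gE Gj) : triple * option 'I_2 := (sval (sval g).1, (sval g).2).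

Lemma raw_of_insplit g : insplit_raw (raw_of g).
Proof. by case: g => [[[t At] [b|]] g_in]. Qed.

Lemma raw_of_inj : injective raw_of.
Proof.
move=> [[g o] g_in] [[g' o'] g'_in] [/sig_eq g_g' /= o_o'].
by apply: sig_eq; rewrite /= g_g' o_o'.
Qed.

Definition to_Gj (t : triple * option 'I_2) : gE Gj :=
  if classic_dec (@insplit_edge (GA A) j (edge_of t.1, t.2)) is left h
  then exist _ (edge_of t.1, t.2) h else eij0.

Lemma to_GjK t : insplit_raw t -> raw_of (to_Gj t) = t.
Proof.
case: t => [t o] [/= At t_src].
have t_in : @insplit_edge (GA A) j (edge_of t, o).
  by case: o t_src => [b|] /=; rewrite edge_ofK.
by rewrite /to_Gj; destruct classic_dec => //; rewrite /raw_of /= edge_ofK.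
Qed.

Lemma insplit2_gs_raw (g : gE Gj) :
  val (gs g) = if (raw_of g).2 is Some b then inr b else inl (raw_of g).1.1.1.
Proof. by rewrite insplit2_gs. Qed.

Lemma insplit2_gr_raw (g : gE Gj) :
  val (gr g) = if (raw_of g).1.1.2 == j then inr (sep_edge eij (sval g).1)
               else inl (raw_of g).1.1.2.
Proof. by rewrite insplit2_gr. Qed.

Lemma vi_neq_j0 : vi <> j0.
Proof. by move=> /(f_equal val); rewrite !split_vertK //=; apply/eqP. Qed.

Lemma gs_eij0 : gs eij0 = vi.
Proof. by apply: val_inj; rewrite insplit2_gs split_vertK //=; apply/eqP. Qed.

Lemma gr_eij0 : gr eij0 = j0.
Proof.
apply: val_inj.
by rewrite insplit2_gr split_vertK //= /insplit_rng /= eqxx sep_edge_self.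
Qed.

Lemma gs_ejj0 : gs ejj0 = j0.
Proof. by apply: val_inj; rewrite insplit2_gs split_vertK. Qed.

Lemma into_j0 (g : gE Gj) : gr g = j0 -> g = eij0.
Proof.
move=> /(f_equal val); rewrite insplit2_gr split_vertK //.
case: g => [[g [b|]] g_in] /=; rewrite /insplit_rng /=;
  case: eqP => // _ [] /sep_edge_eq0 g_eij; subst g.
- by case: i_neq_j.
- exact: sig_eq.
Qed.

Lemma out_j0_cover : exists L, forall g : gE Gj, gs g = j0 -> g = ejj0 \/ In g L.
Proof.
suff [L cover] : fin_pred (fun g : gE Gj => gs g = j0) by exists L => g /cover; right.
have out_j0 (g : gE Gj) : gs g = j0 -> (sval g).2 = Some ord0 /\ gs (sval g).1 = j.
  move=> /(f_equal val); rewrite insplit2_gs split_vertK //.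
  by case: g => [[g [b|]] g_in] //= [->].
have [l cover] := fin_out_j.
apply: (@fin_pred_inj Gj _ (fun g => (sval g).1) l).
  move=> g g' /out_j0 [o _] /out_j0 [o' _] g_g'; apply: sig_eq.
  by rewrite (surjective_pairing (sval g)) (surjective_pairing (sval g')) g_g' o o'.
by move=> g /out_j0 [_ /cover].
Qed.

Definition edge_to_Gj (t : gE (GA A')) : gE Gj := to_Gj (raw_image (sval t)).

Lemma raw_of_edge_to_Gj (t : gE (GA A')) : raw_of (edge_to_Gj t) = raw_image (sval t).
Proof. exact: to_GjK (raw_image_insplit (svalP t)). Qed.

Lemma edge_to_Gj_inj : injective edge_to_Gj.
Proof.
move=> t t' /(f_equal raw_of); rewrite !raw_of_edge_to_Gj => /raw_image_inj.
exact: sig_eq.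
Qed.

Lemma edge_to_Gj_neq_ejj0 (t : gE (GA A')) : edge_to_Gj t <> ejj0.
Proof. by move=> /(f_equal raw_of); rewrite raw_of_edge_to_Gj; apply: raw_image_neq_last. Qed.

Lemma edge_to_Gj_onto (g : gE Gj) : g <> ejj0 -> exists t, edge_to_Gj t = g.
Proof.
move=> g_last; have g_raw : raw_of g <> last_raw by move=> /(@raw_of_inj _ ejj0).
have [p_in p_image] := raw_preimageK (raw_of_insplit g) g_raw.
by exists (exist edgeA' _ p_in); apply: raw_of_inj; rewrite raw_of_edge_to_Gj.
Qed.

Lemma edge_to_Gj_src (t : gE (GA A')) :
  merge_vertex j (gs t) = if gs (edge_to_Gj t) == j0 then vi else gs (edge_to_Gj t).
Proof.
apply: val_inj; rewrite merge_vertexE (fun_if val) -[gs (edge_to_Gj t) == _]val_eqE.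
rewrite insplit2_gs_raw raw_of_edge_to_Gj !split_vertK //=.
case: t => [[[x y] k] _] /=; have [->|x_i] := eqVneq x i.
  by rewrite (negPf i_j); case: (k < extra y).
by case: (x == j).
Qed.

Lemma edge_to_Gj_rng (t : gE (GA A')) :
  merge_vertex j (gr t) = if gr (edge_to_Gj t) == j0 then gr ejj0 else gr (edge_to_Gj t).
Proof.
have ejj0_rng : val (gr ejj0) = inr ord_max.
  by rewrite insplit2_gr /insplit_rng /= eqxx sep_edge_neq //; exact: ejj_neq_eij.
have image_y : (raw_image (sval t)).1.1.2 = (sval t).1.2.
  by case: t => [[[x y] k] _] /=; case: ifP => //; case: ifP.
apply: val_inj; rewrite merge_vertexE (fun_if val) -[gr (edge_to_Gj t) == _]val_eqE.
rewrite insplit2_gr_raw split_vertK // ejj0_rng raw_of_edge_to_Gj image_y /=.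
case: eqP => // _; case: (sep_edge _ _) => [[|[|m]] hb] //=; rewrite ?eqxx //.
by congr inr; apply: val_inj.
Qed.

Lemma insplit_bypass_desc : bypass_desc (@gr Gj) j0 vi ejj0 (GA A') (@gs Gj).
Proof.
have [bv_inj bv_out bv_onto] := merge_vertex_bij j.
exists (merge_vertex j), edge_to_Gj; split; [by []|split; [split|split]].
- exact: edge_to_Gj_inj.
- exact: edge_to_Gj_neq_ejj0.
- exact: edge_to_Gj_onto.
- exact: edge_to_Gj_src.
- exact: edge_to_Gj_rng.
Qed.

Lemma row_add_move_eq : mx_move_eq A A'.
Proof.
apply: (rst_trans _ _ _ Gj); first by apply: rst_step; right; right; right; exact: moveI_insplit.
have [L cover] := out_j0_cover.
exact: (move_eq_bypass vi_neq_j0 gr_eij0 into_j0 gs_eij0 gs_ejj0 cover insplit_bypass_desc).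
Qed.
End RowAddMove.

Theorem lemma7p1 (n : nat) (A : 'M[xnat]_n) (i j : 'I_n) :
  (forall k, A k k <> xfin 0) ->
  i != j ->
  A i j <> xfin 0 ->
  (forall l, A j l <> xinf) ->
  [/\ mx_move_eq A (row_add_move A i j),
      (forall k, row_add_move A i j k k <> xfin 0),
      (irreducible A -> irreducible (row_add_move A i j)) &
      (forall (m : nat) (h : m <= n),
         irreducible (corner h A) -> irreducible (corner h (row_add_move A i j)))].
Proof.
move=> A_diag i_j Aij rowj_fin; split.
- exact: row_add_move_eq.
- exact: row_add_move_diag.
- by apply: strongly_connected_GA_mono => x y; apply: row_add_move_pos.
- move=> m h; apply: strongly_connected_GA_mono => x y.
  by rewrite [X in xlt 0 X -> _]mxE [X in _ -> xlt 0 X]mxE; apply: row_add_move_pos.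
Qed.
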